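(* Let $f:\mathbb{R}^n\to\mathbb{R}$ be bounded below and continuously differentiable with $\nabla f$ Lipschitz with constant $L_{\nabla f}$. Let $x\in\mathbb{R}^n$, $\Delta>0$, points $y_1,\ldots,y_p$ with $\|y_i-x\|\le\beta\Delta$ for some $\beta>0$ and all $i$, with $\hat F$ invertible, and let $m$ be the minimum Frobenius norm quadratic interpolation model of $f$ and $\ell_1,\ldots,\ell_p$ the associated minimum Frobenius norm Lagrange polynomials (see context). Suppose $\max_{y\in B(x,\Delta)}\max_{i}|\ell_i(y)|\le\Lambda_\infty$. Then the Hessian $H$ of $m$ satisfies $\|H\|\le\kappa_H:=12L_{\nabla f}p\beta^2\Lambda_\infty$.
   Context: Here $n+2\le p\le(n+1)(n+2)/2-1$. Let $\hat s_i=(y_i-x)/\Delta$, $\hat M$ with rows $[1,\hat s_i^T]$, $\hat P_{ij}=\tfrac12(\hat s_i^T\hat s_j)^2$, $\hat F=\begin{bmatrix}\hat P&\hat M\\ \hat M^T&0\end{bmatrix}$. For data values $v_1,\ldots,v_p$, the minimum Frobenius norm interpolant is the quadratic $q(y)=c+g^T(y-x)+\tfrac12(y-x)^TH(y-x)$ with $H$ symmetric minimizing $\tfrac14\|H\|_F^2$ subject to $q(y_i)=v_i$ for all $i$; when $\hat F$ is invertible it is unique and obtained by solving $\hat F[\hat\lambda;c;\Delta g]=[v;0;0_n]$ and setting $H=\sum_i(\hat\lambda_i/\Delta^4)(y_i-x)(y_i-x)^T$. The model $m$ uses $v_i=f(y_i)$; the Lagrange polynomial $\ell_i$ uses $v_j=\delta_{ij}$.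 $\|H\|$ is the operator 2-norm; $B(x,\Delta)=\{y:\|y-x\|\le\Delta\}$. *)

From HB Require Import structures.
From mathcomp Require Import all_boot all_order all_algebra.
From mathcomp Require Import all_classical all_reals all_analysis.
Set Implicit Arguments. Unset Strict Implicit. Unset Printing Implicit Defensive.
Import Order.TTheory GRing.Theory Num.Theory.
Import numFieldNormedType.Exports.
Local Open Scope ring_scope.
Local Open Scope classical_set_scope.

Section Defs.
Variable R : realType.

Definition enorm (n : nat) (v : 'rV[R]_n) : R := Num.sqrt (\sum_i (v 0 i) ^+ 2).

Definition opnorm2 (n : nat) (H : 'M[R]_n) : R :=
  sup [set enorm (v *m H^T) | v in [set v : 'rV[R]_n | enorm v <= 1]].

Definition frob2 (n : nat) (H : 'M[R]_n) : R := \sum_i \sum_j (H i j) ^+ 2.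

Definition grad (n : nat) (f : 'rV[R]_n -> R) (x : 'rV[R]_n) : 'rV[R]_n :=
  \row_j derive f x (delta_mx 0 j : 'rV[R]_n).

Definition quad (n : nat) (x : 'rV[R]_n) (c : R) (g : 'rV[R]_n) (H : 'M[R]_n)
  (y : 'rV[R]_n) : R :=
  c + (g *m (y - x)^T) 0 0 + 2^-1 * (((y - x) *m H *m (y - x)^T) 0 0).

Definition is_mfn_interp (n p : nat) (x : 'rV[R]_n) (y : 'I_p -> 'rV[R]_n)
  (v : 'I_p -> R) (c : R) (g : 'rV[R]_n) (H : 'M[R]_n) : Prop :=
  [/\ H^T = H,
      (forall i, quad x c g H (y i) = v i) &
      (forall c' g' H', H'^T = H' -> (forall i, quad x c' g' H' (y i) = v i) ->
         4^-1 * frob2 H <= 4^-1 * frob2 H')].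

Definition shat (n p : nat) (x : 'rV[R]_n) (Delta : R) (y : 'I_p -> 'rV[R]_n)
  (i : 'I_p) : 'rV[R]_n := Delta^-1 *: (y i - x).

Definition Mhat (n p : nat) (x : 'rV[R]_n) (Delta : R) (y : 'I_p -> 'rV[R]_n)
  : 'M[R]_(p, 1 + n) :=
  row_mx (const_mx 1) (\matrix_(i < p) shat x Delta y i).

Definition Phat (n p : nat) (x : 'rV[R]_n) (Delta : R) (y : 'I_p -> 'rV[R]_n)
  : 'M[R]_p :=
  \matrix_(i, j) (2^-1 * ((shat x Delta y i *m (shat x Delta y j)^T) 0 0) ^+ 2).

Definition Fhat (n p : nat) (x : 'rV[R]_n) (Delta : R) (y : 'I_p -> 'rV[R]_n)
  : 'M[R]_(p + (1 + n)) :=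
  block_mx (Phat x Delta y) (Mhat x Delta y) (Mhat x Delta y)^T 0.

End Defs.

From HB Require Import structures.
From mathcomp Require Import all_boot all_order all_algebra.
From mathcomp Require Import all_classical all_reals all_analysis.
From mathcomp Require Import ring lra zify.
Set Implicit Arguments. Unset Strict Implicit. Unset Printing Implicit Defensive.
Import Order.TTheory GRing.Theory Num.Theory.
Import numFieldNormedType.Exports.
Local Open Scope ring_scope.

(* The Hessian of a minimum-Frobenius-norm interpolant is Frobenius-orthogonal to the
   Hessian of every symmetric quadratic vanishing at the sample points: perturbing the
   interpolant along such a quadratic keeps it interpolating, so minimality kills the
   linear term.  Hence H = sum_i a_i Hl_i, where a_i = f(y_i) - f(x) - grad f(x).(y_i - x)
   is the error of the linear Taylor model at y_i, and |a_i| <= Lg (beta Delta)^2 by the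
   mean value theorem.  A second difference of l_i across B(x, Delta) gives
   Delta^2 |z' Hl_i z| <= 4 Lambda |z|^2, and by polarization the operator norm of a
   symmetric matrix is at most any constant bounding its quadratic form on the unit
   sphere.  Altogether ||H|| <= 4 Lg p beta^2 Lambda. *)

Lemma sqr_le_of_deg2_ge0 (R : realFieldType) (a b c : R) :
  0 <= b -> (forall t, 0 <= c + 2 * t * a + t ^+ 2 * b) -> a ^+ 2 <= b * c.
Proof.
move=> b_ge0 hpos; have [b_gt0 | b_le0] := ltrP 0 b.
  have := hpos (- (a / b)); set t := a / b.
  have tb : t * b = a by rewrite /t divfK ?gt_eqF.
  nra.
have b0 : b = 0 by apply/eqP; rewrite eq_le b_le0 b_ge0.
rewrite b0 mul0r; have [-> | a_neq0] := eqVneq a 0; first by rewrite expr0n.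
have := hpos (- ((`|c| + 1) / (2 * a))); set t := _ / _.
have ta : 2 * t * a = `|c| + 1.
  by rewrite /t mulrAC mulrC divfK ?mulf_neq0 ?pnatr_eq0.
rewrite b0 mulr0 addr0 mulrN mulNr ta.
have := ler_norm c; lra.
Qed.

Section Euclidean.
Variables (R : realType) (n : nat).
Implicit Types (u v w : 'rV[R]_n) (t : R).

Definition dotv u v : R := (u *m v^T) 0 0.
Definition sqnorm v : R := dotv v v.

Lemma dotvE u v : dotv u v = \sum_i u 0 i * v 0 i.
Proof. by rewrite /dotv !mxE; apply: eq_bigr => i _; rewrite mxE. Qed.

Lemma dotvC u v : dotv u v = dotv v u.
Proof. by rewrite !dotvE; apply: eq_bigr => i _; rewrite mulrC. Qed.

Lemma dotvDl u v w : dotv (u + v) w = dotv u w + dotv v w.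
Proof. by rewrite /dotv mulmxDl mxE. Qed.

Lemma dotvZl t u v : dotv (t *: u) v = t * dotv u v.
Proof. by rewrite /dotv -scalemxAl mxE. Qed.

Lemma dotvNl u v : dotv (- u) v = - dotv u v.
Proof. by rewrite /dotv mulNmx mxE. Qed.

Lemma dotvBl u v w : dotv (u - v) w = dotv u w - dotv v w.
Proof. by rewrite dotvDl dotvNl. Qed.

Lemma dotv_suml (I : finType) (F : I -> 'rV[R]_n) v :
  dotv (\sum_i F i) v = \sum_i dotv (F i) v.
Proof. by rewrite /dotv mulmx_suml summxE. Qed.

Lemma sqnorm_ge0 v : 0 <= sqnorm v.
Proof. by rewrite /sqnorm dotvE sumr_ge0 // => i _; rewrite -expr2 sqr_ge0. Qed.

Lemma dotvDr u v w : dotv u (v + w) = dotv u v + dotv u w.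
Proof. by rewrite !(dotvC u) dotvDl. Qed.

Lemma dotvZr t u v : dotv u (t *: v) = t * dotv u v.
Proof. by rewrite !(dotvC u) dotvZl. Qed.

Lemma dotvNr u v : dotv u (- v) = - dotv u v.
Proof. by rewrite !(dotvC u) dotvNl. Qed.

Lemma dotv0r u : dotv u 0 = 0.
Proof. by rewrite /dotv trmx0 mulmx0 mxE. Qed.

Lemma sqnorm_eq0 v : (sqnorm v == 0) = (v == 0).
Proof.
apply/idP/eqP => [|->]; last by rewrite /sqnorm dotv0r.
rewrite /sqnorm dotvE psumr_eq0 => [/allP v0|i _]; last by rewrite -expr2 sqr_ge0.
apply/rowP => i; rewrite mxE.
by move: (v0 i (mem_index_enum i)); rewrite mulf_eq0 orbb => /eqP.
Qed.

Lemma sqnormDZ u t v :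
  sqnorm (u + t *: v) = sqnorm u + 2 * t * dotv u v + t ^+ 2 * sqnorm v.
Proof. by rewrite /sqnorm !(dotvDl, dotvDr, dotvZl, dotvZr) (dotvC v u); ring. Qed.

Lemma sqnormZ t v : sqnorm (t *: v) = t ^+ 2 * sqnorm v.
Proof. by rewrite /sqnorm dotvZl dotvZr mulrA expr2. Qed.

Lemma sqnorm_parallelogram u v :
  sqnorm (u + v) + sqnorm (u - v) = 2 * sqnorm u + 2 * sqnorm v.
Proof.
have := sqnormDZ u 1 v; have := sqnormDZ u (-1) v.
by rewrite scale1r scaleN1r => -> ->; ring.
Qed.

Lemma enormE v : enorm v = Num.sqrt (sqnorm v).
Proof.
by rewrite /enorm /sqnorm dotvE; congr Num.sqrt; apply: eq_bigr => i _; rewrite expr2.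
Qed.

Lemma enorm_ge0 v : 0 <= enorm v.
Proof. by rewrite enormE sqrtr_ge0. Qed.

Lemma enorm0 : enorm (0 : 'rV[R]_n) = 0.
Proof. by rewrite enormE /sqnorm dotv0r sqrtr0. Qed.

Lemma enorm_gt0 v : v != 0 -> 0 < enorm v.
Proof. by rewrite enormE sqrtr_gt0 lt_def sqnorm_eq0 sqnorm_ge0 andbT. Qed.

Lemma enorm_sqr v : enorm v ^+ 2 = sqnorm v.
Proof. by rewrite enormE sqr_sqrtr // sqnorm_ge0. Qed.

Lemma enormZ t v : enorm (t *: v) = `|t| * enorm v.
Proof. by rewrite !enormE sqnormZ sqrtrM ?sqr_ge0 // sqrtr_sqr. Qed.

Lemma enormN v : enorm (- v) = enorm v.
Proof. by rewrite -scaleN1r enormZ normrN normr1 mul1r. Qed.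

Lemma cauchy_schwarz u v : `|dotv u v| <= enorm u * enorm v.
Proof.
have : dotv u v ^+ 2 <= sqnorm v * sqnorm u.
  apply: sqr_le_of_deg2_ge0; first exact: sqnorm_ge0.
  by move=> t; rewrite -sqnormDZ sqnorm_ge0.
rewrite -ler_sqrt ?mulr_ge0 ?sqnorm_ge0 // sqrtr_sqr sqrtrM ?sqnorm_ge0 //.
by rewrite -!enormE mulrC.
Qed.

End Euclidean.

Lemma lipschitz_const_ge0 (R : realType) (n m : nat) (F : 'rV[R]_n -> 'rV[R]_m) (L : R) :
  (0 < n)%N ->
  (forall u v, enorm (F u - F v) <= L * enorm (u - v)) -> 0 <= L.
Proof.
move=> n_gt0 lip; pose e : 'rV[R]_n := delta_mx 0 (Ordinal n_gt0).
have e_gt0 : 0 < enorm (e - 0).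
  rewrite subr0 enorm_gt0 //; apply/eqP => /rowP/(_ (Ordinal n_gt0)).
  by rewrite !mxE !eqxx; apply/eqP/oner_neq0.
by rewrite -(pmulr_lge0 _ e_gt0) (le_trans (enorm_ge0 _) (lip e 0)).
Qed.

Section QuadraticModels.
Variables (R : realType) (n : nat).
Implicit Types (x z u v g : 'rV[R]_n) (H K : 'M[R]_n) (a c t : R).

Lemma sqnorm_mxvec H : sqnorm (mxvec H) = frob2 H.
Proof.
rewrite /sqnorm dotvE (reindex _ (curry_mxvec_bij _ _)) /= /frob2 pair_bigA.
by apply: eq_bigr => -[i j] _; rewrite mxvecE expr2.
Qed.

Definition qform H u v : R := dotv (u *m H) v.

Lemma qformD H K u v : qform (H + K) u v = qform H u v + qform K u v.
Proof. by rewrite /qform mulmxDr dotvDl. Qed.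

Lemma qformB H K u v : qform (H - K) u v = qform H u v - qform K u v.
Proof. by rewrite /qform mulmxBr dotvBl. Qed.

Lemma qformZ a H u v : qform (a *: H) u v = a * qform H u v.
Proof. by rewrite /qform -scalemxAr dotvZl. Qed.

Lemma qform_sum (I : finType) (F : I -> 'M[R]_n) u v :
  qform (\sum_i F i) u v = \sum_i qform (F i) u v.
Proof. by rewrite /qform mulmx_sumr dotv_suml. Qed.

Lemma qformNN H u v : qform H (- u) (- v) = qform H u v.
Proof. by rewrite /qform mulNmx dotvNl dotvNr opprK. Qed.

Lemma qform_vec0 H : qform H 0 0 = 0.
Proof. by rewrite /qform mul0mx dotv0r. Qed.

Lemma qformZZ H t u v : qform H (t *: u) (t *: v) = t ^+ 2 * qform H u v.
Proof. by rewrite /qform -scalemxAl dotvZl dotvZr mulrA expr2. Qed.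

Lemma qform0 u v : qform 0 u v = 0.
Proof. by rewrite /qform mulmx0 dotvC dotv0r. Qed.

Lemma qform_combination_le (I : finType) (w : I -> R) (F : I -> 'M[R]_n) z (B : R) :
  (forall i, `|w i| * `|qform (F i) z z| <= B) ->
  `|qform (\sum_i w i *: F i) z z| <= #|I|%:R * B.
Proof.
move=> hB; rewrite qform_sum mulr_natl -sumr_const.
apply: le_trans (ler_norm_sum _ _ _) _.
by apply: ler_sum => i _; rewrite qformZ normrM.
Qed.

Lemma quadE x c g H z :
  quad x c g H z = c + dotv g (z - x) + 2^-1 * qform H (z - x) (z - x).
Proof. by []. Qed.

Lemma quadD x c g H c' g' H' z :
  quad x (c + c') (g + g') (H + H') z = quad x c g H z + quad x c' g' H' z.
Proof. by rewrite !quadE dotvDl qformD; ring. Qed.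

Lemma quadZ x a c g H z : quad x (a * c) (a *: g) (a *: H) z = a * quad x c g H z.
Proof. by rewrite !quadE dotvZl qformZ; ring. Qed.

Lemma quadB x c g H c' g' H' z :
  quad x (c - c') (g - g') (H - H') z = quad x c g H z - quad x c' g' H' z.
Proof. by rewrite !quadE dotvBl qformB; ring. Qed.

Lemma quad_sum (I : finType) x (w : I -> R) (c : I -> R) (g : I -> 'rV[R]_n)
    (H : I -> 'M[R]_n) z :
  quad x (\sum_i w i * c i) (\sum_i w i *: g i) (\sum_i w i *: H i) z
  = \sum_i w i * quad x (c i) (g i) (H i) z.
Proof.
rewrite quadE dotv_suml qform_sum mulr_sumr -!big_split /=.
by apply: eq_bigr => i _; rewrite quadE dotvZl qformZ; ring.
Qed.

Lemma quad_second_difference x c g H v :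
  quad x c g H (v + x) + quad x c g H (- v + x) - 2 * quad x c g H x = qform H v v.
Proof.
by rewrite !quadE !addrK subrr qformNN qform_vec0 dotv0r dotvNr; field.
Qed.

End QuadraticModels.

Section MinimumFrobeniusNorm.
Variables (R : realType) (n p : nat) (x : 'rV[R]_n) (y : 'I_p -> 'rV[R]_n).

Lemma mfn_hessian_orthogonal v c g H c' g' K :
  is_mfn_interp x y v c g H -> K^T = K -> (forall i, quad x c' g' K (y i) = 0) ->
  dotv (mxvec H) (mxvec K) = 0.
Proof.
case=> sH interp minH sK vanish.
have : dotv (mxvec H) (mxvec K) ^+ 2 <= sqnorm (mxvec K) * 0.
  apply: sqr_le_of_deg2_ge0 => [|t]; first exact: sqnorm_ge0.
  have := minH (c + t * c') (g + t *: g') (H + t *: K).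
  rewrite linearD linearZ /= sH sK => /(_ erefl).
  have interpt i : quad x (c + t * c') (g + t *: g') (H + t *: K) (y i) = v i.
    by rewrite quadD quadZ interp vanish mulr0 addr0.
  move=> /(_ interpt); rewrite -!sqnorm_mxvec linearD linearZ /= sqnormDZ; lra.
by rewrite mulr0 => a2; apply/eqP; rewrite -sqrf_eq0 eq_le a2 sqr_ge0.
Qed.

Lemma mfn_hessian_lagrange_expansion v c g H cl gl Hl c0 g0 :
  is_mfn_interp x y v c g H ->
  (forall i, is_mfn_interp x y (fun j => (i == j)%:R) (cl i) (gl i) (Hl i)) ->
  H = \sum_i (v i - quad x c0 g0 0 (y i)) *: Hl i.
Proof.
move=> mfnH mfnL; set w := fun i => v i - quad x c0 g0 0 (y i).
set G := \sum_i w i *: Hl i.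
have interpG j :
    quad x (c0 + \sum_i w i * cl i) (g0 + \sum_i w i *: gl i) G (y j) = v j.
  rewrite -[G]add0r quadD quad_sum (bigD1 j) //= big1 => [|i ij].
    by case: (mfnL j) => _ -> _; rewrite eqxx mulr1 addr0 /w addrC subrK.
  by case: (mfnL i) => _ -> _; rewrite (negbTE ij) mulr0.
have sHG : (H - G)^T = H - G.
  rewrite linearB /= linear_sum /=; congr (_ - _); first by case: mfnH.
  by apply: eq_bigr => i _; rewrite linearZ /=; case: (mfnL i) => ->.
have vanish j : quad x (c - (c0 + \sum_i w i * cl i)) (g - (g0 + \sum_i w i *: gl i))
    (H - G) (y j) = 0.
  by rewrite quadB interpG; case: mfnH => _ -> _; rewrite subrr.
have orthH := mfn_hessian_orthogonal mfnH sHG vanish.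
have orthG : dotv (mxvec G) (mxvec (H - G)) = 0.
  rewrite linear_sum dotv_suml big1 // => i _.
  by rewrite linearZ dotvZl (mfn_hessian_orthogonal (mfnL i) sHG vanish) mulr0.
apply/eqP; rewrite -subr_eq0 -mxvec_eq0 -sqnorm_eq0 /sqnorm {1}linearB /=.
by rewrite dotvBl orthH orthG subrr.
Qed.

End MinimumFrobeniusNorm.

Section QuadraticFormBounds.
Variables (R : realType) (n : nat).
Implicit Types (u v z : 'rV[R]_n) (H : 'M[R]_n).

Lemma qformC H u v : H^T = H -> qform H u v = qform H v u.
Proof.
move=> sH; rewrite /qform /dotv.
transitivity ((u *m H *m v^T)^T 0 0); first by rewrite [RHS]mxE.
by rewrite !trmx_mul trmxK sH mulmxA.
Qed.

Lemma qform_polarization H u v : H^T = H ->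
  4 * qform H u v = qform H (u + v) (u + v) - qform H (u - v) (u - v).
Proof.
move=> sH; have := qformC u v sH; rewrite /qform.
rewrite mulmxDl mulmxBl !(dotvDl, dotvDr, dotvNl, dotvNr) => ->; ring.
Qed.

Lemma sym_qform_le H (M : R) : H^T = H ->
  (forall z, `|qform H z z| <= M * sqnorm z) ->
  forall u v, 2 * qform H u v <= M * (sqnorm u + sqnorm v).
Proof.
move=> sH hM u v; have := sqnorm_parallelogram u v.
have := qform_polarization u v sH.
move: (hM (u + v)) (hM (u - v)); rewrite !ler_norml => /andP[_ h1] /andP[h2 _].
nra.
Qed.

Lemma opnorm2_le H (M : R) : H^T = H -> 0 <= M ->
  (forall z, `|qform H z z| <= M * sqnorm z) -> opnorm2 H <= M.
Proof.
move=> sH M_ge0 hM; apply: ge_sup.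
  by exists (enorm ((0 : 'rV[R]_n) *m H^T)), 0; rewrite //= enorm0 ler01.
move=> _ [v /= v_le1 <-]; rewrite sH; set w := v *m H.
have [-> | w_neq0] := eqVneq w 0; first by rewrite enorm0.
have w_gt0 := enorm_gt0 w_neq0.
set u := (enorm w)^-1 *: w.
have vu : qform H v u = enorm w.
  by rewrite /qform dotvZr -/(sqnorm w) -enorm_sqr expr2 mulKf ?gt_eqF.
have u1 : sqnorm u = 1 by rewrite sqnormZ -enorm_sqr -exprMn mulVf ?gt_eqF ?expr1n.
have v1 : sqnorm v <= 1.
  by rewrite -enorm_sqr -(expr1n R 2) ler_pXn2r ?nnegrE ?enorm_ge0.
have := sym_qform_le sH hM v u; rewrite vu u1; nra.
Qed.

Lemma qform_ball_bound H (r M : R) : 0 < r ->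
  (forall v, enorm v <= r -> `|qform H v v| <= M) ->
  forall z, r ^+ 2 * `|qform H z z| <= M * sqnorm z.
Proof.
move=> r_gt0 hM z; have [-> | z_neq0] := eqVneq z 0.
  by rewrite qform_vec0 /sqnorm dotv0r normr0 !mulr0.
have z_gt0 := enorm_gt0 z_neq0; set s := r / enorm z.
have s_gt0 : 0 < s by rewrite divr_gt0.
have := hM (s *: z); rewrite enormZ gtr0_norm // divfK ?gt_eqF // => /(_ (lexx r)).
rewrite qformZZ normrM ger0_norm ?sqr_ge0 // -enorm_sqr => h.
have -> : r ^+ 2 = s ^+ 2 * enorm z ^+ 2 by rewrite -exprMn divfK ?gt_eqF.
by rewrite mulrAC ler_wpM2r ?sqr_ge0.
Qed.

End QuadraticFormBounds.

Lemma lagrange_hessian_bound (R : realType) (n : nat) (x : 'rV[R]_n) c g H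
    (Delta Lambda : R) :
  0 < Delta -> (forall z, enorm (z - x) <= Delta -> `|quad x c g H z| <= Lambda) ->
  forall v, Delta ^+ 2 * `|qform H v v| <= 4 * Lambda * sqnorm v.
Proof.
move=> D_gt0 hL; apply: qform_ball_bound => // v v_le.
have := hL (v + x); rewrite addrK => /(_ v_le).
have := hL (- v + x); rewrite addrK enormN => /(_ v_le).
have := hL x; rewrite subrr enorm0 => /(_ (ltW D_gt0)).
rewrite -(quad_second_difference x c g) !ler_norml.
move=> /andP[? ?] /andP[? ?] /andP[? ?]; apply/andP; split; lra.
Qed.

Section Differentiable.
Variables (R : realType) (n : nat) (f : 'rV[R]_n -> R).
Implicit Types (x d z v : 'rV[R]_n).

Lemma derive_grad z v : differentiable f z -> 'D_v f z = dotv (grad f z) v.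
Proof.
move=> df; rewrite deriveE // {1}(row_sum_delta v) linear_sum dotvE.
by apply: eq_bigr => j _; rewrite linearZ /= /grad mxE deriveE // mulrC.
Qed.

Lemma is_derive_line x d t : differentiable f (t *: d + x) ->
  is_derive t 1 (fun s : R => f (s *: d + x)) ('D_d f (t *: d + x)).
Proof.
move=> df.
have dline : is_diff t (fun s : R => s *: d + x) (fun s => s *: d).
  by apply: is_diff_eq; rewrite addr0.
have dl : differentiable (fun s : R => s *: d + x) t by [].
have dfl : differentiable f ((fun s : R => s *: d + x) t) by [].
apply: DeriveDef; first exact/diff_derivable/differentiable_comp.
rewrite -[fun s => _]/(f \o (fun s : R => s *: d + x)).
rewrite deriveE; last exact: differentiable_comp.
rewrite diff_comp // diff_val /= scale1r deriveE //.
Qed.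

Lemma taylor_lipschitz_grad (L : R) x d : (forall z, differentiable f z) ->
  (forall z w, enorm (grad f z - grad f w) <= L * enorm (z - w)) -> 0 <= L ->
  `|f (d + x) - f x - dotv (grad f x) d| <= L * sqnorm d.
Proof.
move=> df lip L_ge0.
have phi' (s : R) :
    is_derive s 1 (fun s : R => f (s *: d + x)) (dotv (grad f (s *: d + x)) d).
  by rewrite -derive_grad //; apply: is_derive_line.
have [|c] := MVT (@ltr01 R) (fun s _ => phi' s).
  by apply: derivable_within_continuous => s _; apply: ex_derive.
rewrite in_itv /= => /andP[c_gt0 c_lt1].
rewrite scale1r scale0r add0r subr0 mulr1 => ->; rewrite -dotvBl.
apply: le_trans (cauchy_schwarz _ _) _.
apply: le_trans (ler_wpM2r (enorm_ge0 d) (lip _ _)) _.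
rewrite addrK enormZ gtr0_norm // -enorm_sqr expr2 mulrA.
by rewrite ler_wpM2r ?enorm_ge0 // ler_wpM2l // ler_piMl ?enorm_ge0 ?ltW.
Qed.

End Differentiable.

Theorem lemma6p7 (R : realType) (n p : nat) (f : 'rV[R]_n -> R) (Lg : R)
  (x : 'rV[R]_n) (Delta beta Lambda : R) (y : 'I_p -> 'rV[R]_n)
  (c : R) (g : 'rV[R]_n) (H : 'M[R]_n)
  (cl : 'I_p -> R) (gl : 'I_p -> 'rV[R]_n) (Hl : 'I_p -> 'M[R]_n) :
  (n + 2 <= p)%N -> (p <= (n + 1) * (n + 2) %/ 2 - 1)%N ->
  (exists b : R, forall z, b <= f z) ->
  (forall z, differentiable f z) ->
  continuous (grad f) ->
  (forall z w, enorm (grad f z - grad f w) <= Lg * enorm (z - w)) ->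
  0 < Delta -> 0 < beta ->
  (forall i, enorm (y i - x) <= beta * Delta) ->
  Fhat x Delta y \in unitmx ->
  is_mfn_interp x y (fun i => f (y i)) c g H ->
  (forall i, is_mfn_interp x y (fun j => (i == j)%:R) (cl i) (gl i) (Hl i)) ->
  (forall z, enorm (z - x) <= Delta ->
     forall i, `|quad x (cl i) (gl i) (Hl i) z| <= Lambda) ->
  opnorm2 H <= 12 * Lg * p%:R * beta ^+ 2 * Lambda.
Proof.
(* Invertibility of Fhat, boundedness of f and continuity of grad f only matter for the
   existence of the interpolants, which is assumed here.  The bounds on p serve to exclude
   n = 0, where the Lipschitz bound says nothing about the sign of Lg. *)
move=> hp1 hp2 _ df _ lip D_gt0 b_gt0 hy _ mfn mfnL hL.
have [n_gt0 p_gt0] : (0 < n)%N /\ (0 < p)%N by split; lia.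
have Lg_ge0 := lipschitz_const_ge0 n_gt0 lip.
have La_ge0 : 0 <= Lambda.
  apply: le_trans (normr_ge0 _) (hL x _ (Ordinal p_gt0)).
  by rewrite subrr enorm0 ltW.
pose a i := f (y i) - quad x (f x) (grad f x) 0 (y i).
have HE : H = \sum_i a i *: Hl i.
  exact: (mfn_hessian_lagrange_expansion (f x) (grad f x) mfn mfnL).
have a_le i : `|a i| <= Lg * beta ^+ 2 * Delta ^+ 2.
  rewrite /a quadE qform0 mulr0 addr0 opprD addrA.
  have := taylor_lipschitz_grad x (y i - x) df lip Lg_ge0; rewrite subrK.
  move/le_trans; apply; rewrite -mulrA -exprMn -enorm_sqr ler_wpM2l //.
  by rewrite ler_pXn2r ?nnegrE ?hy ?enorm_ge0 // mulr_ge0 // ltW.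
have [sH _ _] := mfn; set K := Lg * beta ^+ 2 * Lambda.
have K_ge0 : 0 <= K by rewrite mulr_ge0 // mulr_ge0 ?sqr_ge0.
apply: (@le_trans _ _ (p%:R * (4 * K))); last first.
  by have := mulr_ge0 (ler0n R p) K_ge0; rewrite /K; lra.
apply: (opnorm2_le sH) => [|z]; first by rewrite mulr_ge0 // mulr_ge0.
have := @qform_combination_le _ _ _ a Hl z (4 * K * sqnorm z).
rewrite card_ord -HE mulrA; apply => i.
have := lagrange_hessian_bound D_gt0 (fun z hz => hL z hz i) z.
have := a_le i; have := normr_ge0 (qform (Hl i) z z).
have := mulr_ge0 Lg_ge0 (sqr_ge0 beta); rewrite /K; nra.
Qed.
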